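(* Suppose $\mathcal{D}(\cdot)$ is a location-scale family on a convex set $\Theta\subseteq\mathbb{R}^d$, $z_\theta\sim\mathcal{D}(\theta)\iff z_\theta\overset{d}{=}(\Sigma_0+\Sigma(\theta))z_0+\mu_0+\mu\theta$, such that $\Sigma_0+\Sigma(\theta)$ has full rank for all $\theta\in\Theta$. Then $\mathcal{D}(\alpha\theta+(1-\alpha)\theta')\leq_{cx}\alpha\mathcal{D}(\theta)+(1-\alpha)\mathcal{D}(\theta')$ for all $\theta,\theta'\in\Theta$ and $\alpha\in(0,1)$.
   Context: Location-scale family: $z_0\sim\mathcal{D}_0$ is drawn from a fixed zero-mean distribution $\mathcal{D}_0$ on $\mathbb{R}^m$, $\Sigma_0\in\mathbb{R}^{m\times m}$, $\mu_0\in\mathbb{R}^m$ fixed, $\mu:\mathbb{R}^d\to\mathbb{R}^m$ and $\Sigma:\mathbb{R}^d\to\mathbb{R}^{m\times m}$ linear maps. For distributions $\mathcal{D}_1,\mathcal{D}_2$ on $\mathbb{R}^m$, $\mathcal{D}_1\leq_{cx}\mathcal{D}_2$ means $\mathbb{E}_{z\sim\mathcal{D}_1}g(z)\leq\mathbb{E}_{z\sim\mathcal{D}_2}g(z)$ for every convex $g:\mathbb{R}^m\to\mathbb{R}$. $\alpha\mathcal{D}(\theta)+(1-\alpha)\mathcal{D}(\theta')$ denotes the mixture distribution. *)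

From HB Require Import structures.
From mathcomp Require Import all_boot all_order all_algebra.
From mathcomp Require Import all_classical all_reals all_analysis.
Set Implicit Arguments. Unset Strict Implicit. Unset Printing Implicit Defensive.
Import Order.TTheory GRing.Theory Num.Theory.
Local Open Scope ring_scope.

Definition convex_fun (R : realType) (m : nat) (g : 'cV[R]_m -> R) : Prop :=
  forall (x y : 'cV[R]_m) (a : R), 0 <= a -> a <= 1 ->
    g (a *: x + (1 - a) *: y) <= a * g x + (1 - a) * g y.

Definition ls_sample (R : realType) (d m : nat) (T : Type)
  (Sigma0 : 'M[R]_m) (Sigma : 'cV[R]_d -> 'M[R]_m)
  (mu0 : 'cV[R]_m) (mu : 'M[R]_(m, d)) (z0 : T -> 'cV[R]_m)
  (theta : 'cV[R]_d) : T -> 'cV[R]_m :=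
  fun t => (Sigma0 + Sigma theta) *m z0 t + mu0 + mu *m theta.

From HB Require Import structures.
From mathcomp Require Import all_boot all_order all_algebra.
From mathcomp Require Import all_classical all_reals all_analysis.
From mathcomp Require Import measurable_realfun.
From mathcomp Require Import ring lra.
Import Order.TTheory GRing.Theory Num.Theory numFieldNormedType.Exports.
Set Implicit Arguments. Unset Strict Implicit. Unset Printing Implicit Defensive.
Local Open Scope ring_scope.

(* Couple all the distributions on one probability space through
   z_theta = (Sigma0 + Sigma theta) z0 + mu0 + mu theta.  This is affine in
   theta, so z at alpha theta + (1 - alpha) theta' is pointwise the convex
   combination of z_theta and z_theta'; for convex g the inequality therefore
   holds pointwise and survives integration.  What remains is bookkeeping: a
   convex g is Borel (induction on the dimension, approximating the first
   coordinate from below on finer and finer grids) and g(y) >= -C (1 + |y|_1),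
   so every integral involved exists in (-oo, +oo]. *)
Definition l1norm (R : numDomainType) (m : nat) (u : 'cV[R]_m) : R :=
  \sum_i `|u i 0|.

Section ConvexFunBounds.
Variables (R : realType) (m : nat) (g : 'cV[R]_m -> R).
Hypothesis g_convex : convex_fun g.

Lemma convex_fun_le_comb (M : R) (x : 'cV[R]_m) n (w : 'I_n -> R)
    (p : 'I_n -> 'cV[R]_m) :
  g x <= M -> (forall i, g (p i) <= M) ->
  (forall i, 0 <= w i) -> \sum_i w i <= 1 ->
  g (x + \sum_i w i *: (p i - x)) <= M.
Proof.
move=> gx; elim: n w p => [|n IH] w p gp w0 w1; first by rewrite big_ord0 addr0.
rewrite big_ord_recr /=; rewrite big_ord_recr /= in w1.
set w' := fun i : 'I_n => w (widen_ord (leqnSn n) i) in w1 *.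
set p' := fun i : 'I_n => p (widen_ord (leqnSn n) i).
set a := w ord_max in w1 *.
have w'0 : 0 <= \sum_i w' i by apply: sumr_ge0 => i _; apply: w0.
have a0 : 0 <= a by apply: w0.
have [a1 | a_neq1] := eqVneq a 1.
  have w'_eq0 : \sum_i w' i = 0 by apply/eqP; rewrite eq_le w'0; lra.
  rewrite big1 ?add0r => [|i _]; last first.
    by rewrite (psumr_eq0P (fun j _ => w0 _) w'_eq0) ?scale0r.
  by rewrite a1 scale1r addrC subrK.
have c0 : 0 < 1 - a by lra.
pose y := x + \sum_i (w' i / (1 - a)) *: (p' i - x).
have gy : g y <= M.
  apply: IH => [i|i|]; [exact: gp | by rewrite divr_ge0 ?w0 ?ltW |].
  by rewrite -mulr_suml ler_pdivrMr // mul1r; lra.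
have -> : x + (\sum_i w' i *: (p' i - x) + a *: (p ord_max - x))
    = a *: p ord_max + (1 - a) *: y.
  rewrite [in RHS]/y [(1 - a) *: (_ + _)]scalerDr scaler_sumr.
  under [in RHS]eq_bigr do rewrite scalerA mulrCA divff ?mulr1 ?gt_eqF //.
  set S := \sum_i _; rewrite scalerBr scalerBl scale1r.
  by apply/matrixP => i j; rewrite !mxE; ring.
have a1 : a <= 1 by lra.
apply: le_trans (g_convex _ _ a0 a1) _.
have := ler_wpM2l a0 (gp ord_max); have := ler_wpM2l (ltW c0) gy; lra.
Qed.

Lemma convex_fun_le_l1ball (M : R) :
  g 0 <= M -> (forall i, g (delta_mx i 0) <= M /\ g (- delta_mx i 0) <= M) ->
  forall u, l1norm u <= 1 -> g u <= M.
Proof.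
move=> g0 gE u u1.
pose p i : 'cV[R]_m := if 0 <= u i 0 then delta_mx i 0 else - delta_mx i 0.
have -> : u = 0 + \sum_i `|u i 0| *: (p i - 0).
  rewrite add0r {1}[u]matrix_sum_delta; apply: eq_bigr => i _.
  rewrite big_ord1 subr0 /p; case: ifP => [u0|/negbT]; first by rewrite ger0_norm.
  by rewrite -ltNge => /ltr0_norm ->; rewrite scaleNr scalerN opprK.
by apply: convex_fun_le_comb => // i; rewrite /p; case: ifP => _; apply gE.
Qed.

Lemma convex_fun_lower_bound :
  exists C : R, forall y, - C * (1 + l1norm y) <= g y.
Proof.
pose M := \big[Num.max/`|g 0|]_i Num.max `|g (delta_mx i 0)| `|g (- delta_mx i 0)|.
have gM0 : `|g 0| <= M := bigmax_ge_id _ _ _ _.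
have gM u : `|g u| <= M -> g u <= M by apply: le_trans; apply: ler_norm.
have gw u : l1norm u <= 1 -> g u <= M.
  apply: convex_fun_le_l1ball => [|i]; first exact/gM.
  have : Num.max `|g (delta_mx i 0)| `|g (- delta_mx i 0)| <= M := le_bigmax _ _ i.
  by rewrite ge_max => /andP[??]; split; apply: gM.
exists (2 * `|g 0| + M) => y.
set r := l1norm y; have r0 : 0 <= r by apply: sumr_ge0.
(* 0 = a y + (1 - a) w with w = - y / (1 + r) in the unit ball, so convexity
   at 0 bounds g y from below *)
pose a := (2 + r)^-1.
have a0 : 0 <= a by rewrite invr_ge0; lra.
have a1 : a <= 1 by rewrite invf_le1; lra.
pose w := - (1 + r)^-1 *: y.
have gw_le : g w <= M.
  apply: gw; rewrite /l1norm.
  under eq_bigr do rewrite mxE normrM normrN.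
  rewrite -mulr_sumr -/(l1norm y) -/r ger0_norm ?invr_ge0; last lra.
  by rewrite mulrC ler_pdivrMr; lra.
have : g 0 <= a * g y + (1 - a) * g w.
  suff <- : a *: y + (1 - a) *: w = 0 by exact: g_convex.
  rewrite /w scalerA -scalerDl [_ + _](_ : _ = 0) ?scale0r //.
  by rewrite /a; field; lra.
have -> : a * g y + (1 - a) * g w = (g y + (1 + r) * g w) / (2 + r).
  by rewrite /a; field; lra.
rewrite ler_pdivlMr; last lra.
have := ler_wpM2l (_ : 0 <= 1 + r) gw_le; have := ler_norm (- g 0).
rewrite normrN; have := normr_ge0 (g 0).
have : 0 <= r * `|g 0| by rewrite mulr_ge0.
nra.
Qed.

End ConvexFunBounds.

Definition convex_realfun (R : realType) (psi : R -> R) : Prop :=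
  forall (a x y : R), 0 <= a -> a <= 1 ->
    psi (a * x + (1 - a) * y) <= a * psi x + (1 - a) * psi y.

Section ConvexRealfun.
Local Open Scope classical_set_scope.
Variables (R : realType) (psi : R -> R).
Hypothesis psi_convex : convex_realfun psi.

Lemma convex_realfun_lipschitz_left (x k : R) : 0 <= k <= 1 ->
  `|psi (x - k) - psi x| <= k * (`|psi (x + 1) - psi x| + `|psi (x - 1) - psi x|).
Proof.
case/andP=> k0 k1.
have above : psi (x - k) <= k * psi (x - 1) + (1 - k) * psi x.
  by rewrite (_ : x - k = k * (x - 1) + (1 - k) * x); [exact: psi_convex | ring].
have below : (1 + k) * psi x <= psi (x - k) + k * psi (x + 1).
  pose b := (1 + k)^-1.
  have b0 : 0 <= b by rewrite invr_ge0; lra.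
  have b1 : b <= 1 by rewrite invf_le1; lra.
  have := psi_convex (x - k) (x + 1) b0 b1.
  rewrite (_ : b * (x - k) + (1 - b) * (x + 1) = x); last by rewrite /b; field; lra.
  rewrite -(ler_pM2l (_ : 0 < 1 + k)); last lra.
  by rewrite mulrDr !mulrA mulrBr mulr1 divff ?mul1r; [lra | lra].
have := ler_wpM2l k0 (ler_norm (psi (x + 1) - psi x)).
have := ler_wpM2l k0 (ler_norm (psi (x - 1) - psi x)).
have := mulr_ge0 k0 (normr_ge0 (psi (x + 1) - psi x)).
have := mulr_ge0 k0 (normr_ge0 (psi (x - 1) - psi x)).
by rewrite ler_norml; lra.
Qed.

Lemma convex_realfun_cvg_left (u : nat -> R) (x : R) :
  (forall n, u n <= x) -> u @ \oo --> x -> (fun n => psi (u n)) @ \oo --> psi x.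
Proof.
move=> u_le u_cvg.
set K := `|psi (x + 1) - psi x| + `|psi (x - 1) - psi x|.
have gap0 : (fun n => (x - u n) * K) @ \oo --> 0.
  by rewrite -(mul0r K) -(subrr x); apply: cvgMr_tmp; apply: cvgB => //; exact: cvg_cst.
apply: (@squeeze_cvgr _ _ _ _ (fun n => psi x - (x - u n) * K)
                              (fun n => psi x + (x - u n) * K)); last 2 first.
- by rewrite -[X in _ --> X]subr0; apply: cvgB => //; exact: cvg_cst.
- by rewrite -[X in _ --> X]addr0; apply: cvgD => //; exact: cvg_cst.
have near1 : \forall n \near \oo, `|x - u n| <= 1 by exact: cvgr_dist_le u_cvg _ ltr01.
apply: filterS near1 => n un1.
have k01 : 0 <= x - u n <= 1 by rewrite subr_ge0 u_le (le_trans (ler_norm _) un1).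
have := convex_realfun_lipschitz_left x k01.
by rewrite subKr ler_norml -/K => /andP[lo hi]; apply/andP; split; lra.
Qed.

End ConvexRealfun.

Section ConvexFunColMx.
Variables (R : realType) (m : nat) (g : 'cV[R]_(1 + m) -> R).
Hypothesis g_convex : convex_fun g.

Lemma col_mx_scalar_conv (a c c' : R) (y y' : 'cV[R]_m) :
  col_mx (a * c + (1 - a) * c')%:M (a *: y + (1 - a) *: y')
  = a *: col_mx c%:M y + (1 - a) *: col_mx c'%:M y'.
Proof. by rewrite !scale_col_mx add_col_mx raddfD /= -!scale_scalar_mx. Qed.

Lemma convex_fun_col_mx_r (c : R) : convex_fun (fun y => g (col_mx c%:M y)).
Proof.
move=> y y' a a0 a1 /=; have cE : a * c + (1 - a) * c = c by ring.
have := g_convex (col_mx c%:M y) (col_mx c%:M y') a0 a1.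
by rewrite -col_mx_scalar_conv cE.
Qed.

Lemma convex_realfun_col_mx_l (y : 'cV[R]_m) :
  convex_realfun (fun c => g (col_mx c%:M y)).
Proof.
move=> a c c' a0 a1 /=.
have yE : a *: y + (1 - a) *: y = y by rewrite -scalerDl addrC subrK scale1r.
have := g_convex (col_mx c%:M y) (col_mx c'%:M y) a0 a1.
by rewrite -col_mx_scalar_conv yE.
Qed.

End ConvexFunColMx.

(* Rounding down keeps the approximants to the left of x, the side controlled
   by convex_realfun_lipschitz_left. *)
Definition floor_grid (R : realType) (n : nat) (x : R) : R :=
  (Num.floor (x * n.+1%:R))%:~R / n.+1%:R.

Section FloorGrid.
Variable R : realType.
Local Open Scope classical_set_scope.

Lemma floor_grid_le n (x : R) : floor_grid n x <= x.
Proof. by rewrite /floor_grid ler_pdivrMr ?ltr0Sn // floor_le. Qed.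

Lemma floor_grid_gt n (x : R) : x - harmonic n < floor_grid n x.
Proof.
rewrite /floor_grid /= ltr_pdivlMr ?ltr0Sn // mulrBl mulVf ?pnatr_eq0 //.
by rewrite ltrBlDr -intrD1 floorD1_gt.
Qed.

Lemma cvg_floor_grid (x : R) : (fun n => floor_grid n x) @ \oo --> x.
Proof.
apply: (@squeeze_cvgr _ _ _ _ (fun n => x - harmonic n) (fun=> x)).
- by apply: nearW => n; rewrite floor_grid_le andbT ltW ?floor_grid_gt.
- rewrite -[X in _ --> X]subr0.
  by apply: cvgB; [exact: cvg_cst | exact: cvg_harmonic].
- exact: cvg_cst.
Qed.

Lemma nondecreasing_floor_scaled (N : R) : 0 < N ->
  nondecreasing_fun (fun x : R => (Num.floor (x * N))%:~R : R).
Proof. by move=> N0 x y xy; rewrite ler_int le_floor // ler_pM2r. Qed.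

End FloorGrid.

Section MeasurableConvex.
Context (R : realType) (dT : measure_display) (T : measurableType dT).
Local Open Scope classical_set_scope.

Lemma measurable_fun_int_select (k : T -> int) (F : int -> T -> R) :
  measurable_fun setT (fun t => (k t)%:~R : R) ->
  (forall z, measurable_fun setT (F z)) ->
  measurable_fun setT (fun t => F (k t) t).
Proof.
move=> mk mF _ Y mY; rewrite setTI.
have -> : (fun t => F (k t) t) @^-1` Y
    = \bigcup_z ((fun t => (k t)%:~R : R) @^-1` [set z%:~R] `&` F z @^-1` Y).
  apply/seteqP; split => [t Yt|t [z _ [/= /intr_inj kz]]]; first by exists (k t).
  by rewrite /= kz.
apply: countable_bigcupT_measurable => [|z]; first exact: countableP.
by apply: measurableI; rewrite -[X in measurable X]setTI; [apply: mk | apply: mF].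
Qed.

Lemma measurable_convex_fun_comp m (g : 'cV[R]_m -> R) (v : T -> 'cV[R]_m) :
  convex_fun g -> (forall i, measurable_fun setT (fun t => v t i 0)) ->
  measurable_fun setT (fun t => g (v t)).
Proof.
elim: m g v => [|m IH] g v g_convex mv.
  rewrite (_ : (fun t => g (v t)) = cst (g 0)); first exact: measurable_cst.
  by apply: funext => t; rewrite [v t]flatmx0.
pose v0 t := v t ord0 0.
pose v' t : 'cV[R]_m := dsubmx (v t : 'M[R]_(1 + m, 1)).
have vE t : v t = col_mx (v0 t)%:M (v' t).
  rewrite -[LHS](@vsubmxK _ 1 m 1) [usubmx _]mx11_scalar mxE.
  by rewrite (_ : lshift m 0 = ord0) //; exact: val_inj.
have mv' i : measurable_fun setT (fun t => v' t i 0).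
  by rewrite /v'; under eq_fun do rewrite mxE; exact: mv.
have mgc c : measurable_fun setT (fun t => g (col_mx c%:M (v' t))).
  exact: IH (convex_fun_col_mx_r g_convex c) mv'.
apply: (@measurable_fun_cvg _ _ _ _
          (fun n t => g (col_mx (floor_grid n (v0 t))%:M (v' t)))) => [n|t _].
  apply: (@measurable_fun_int_select (fun t => Num.floor (v0 t * n.+1%:R))
            (fun z t => g (col_mx (z%:~R / n.+1%:R)%:M (v' t)))).
  - exact: measurableT_comp (nondecreasing_measurable measurableT
      (nondecreasing_floor_scaled (ltr0Sn _ n))) (mv ord0).
  - by move=> z; apply: mgc.
rewrite vE; apply: (convex_realfun_cvg_left (convex_realfun_col_mx_l g_convex _)).
- by move=> n; exact: floor_grid_le.
- exact: cvg_floor_grid.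
Qed.

End MeasurableConvex.

Section IntegralBoundedBelow.
Context (R : realType) (dT : measure_display) (T : measurableType dT).
Variable mu : {measure set T -> \bar R}.
Local Open Scope ereal_scope.

Definition integrably_bounded_below (f : T -> R) : Prop :=
  measurable_fun setT f /\
  exists2 L : T -> R, mu.-integrable setT (EFin \o L) & forall t, (L t <= f t)%R.

Lemma integrable_or_integral_pinfty (f : T -> R) :
  integrably_bounded_below f ->
  mu.-integrable setT (EFin \o f) \/ \int[mu]_t (f t)%:E = +oo.
Proof.
move=> [mf [L iL Lf]]; set F := EFin \o f.
have mF : measurable_fun setT F by apply/measurable_EFinP.
have [If|nIf] := pselect (mu.-integrable setT F); [by left | right].
have Fn_fin : \int[mu]_t F^\- t < +oo.
  apply: le_lt_trans (integrableP _ _ _ iL).2.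
  apply: ge0_le_integral => //; first exact: measurable_funeneg.
    exact/measurableT_comp/(measurable_int _ iL).
  move=> t _; rewrite funenegE /F /= ge_max !lee_fin normr_ge0 andbT.
  by rewrite -normrN; apply: le_trans (ler_norm _); rewrite lerN2.
have Fp_inf : \int[mu]_t F^\+ t = +oo.
  apply/eqP; rewrite -leye_eq leNgt; apply/negP => Fp_fin; apply: nIf.
  apply/integrableP; split => //; rewrite -/(abse \o F) fune_abse.
  rewrite ge0_integralD //; last 2 first.
  - exact: measurable_funepos.
  - exact: measurable_funeneg.
  by rewrite lte_add_pinfty.
by rewrite integralE Fp_inf addye // eqe_oppLR /= lt_eqF.
Qed.

Lemma integrable_between (f L U : T -> R) : measurable_fun setT f ->
  mu.-integrable setT (EFin \o L) -> mu.-integrable setT (EFin \o U) ->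
  (forall t, L t <= f t <= U t)%R -> mu.-integrable setT (EFin \o f).
Proof.
move=> mf iL iU Lf.
apply: (le_integrable measurableT (g := EFin \o (fun t => `|L t| + `|U t|)%R)).
- exact/measurable_EFinP.
- move=> t _; rewrite /= lee_fin (ger0_norm (addr_ge0 (normr_ge0 _) (normr_ge0 _))).
  have /andP[lo hi] := Lf t; rewrite ler_norml; apply/andP; split.
    by have := ler_norm (- L t); rewrite normrN; have := normr_ge0 (U t); lra.
  by have := ler_norm (U t); have := normr_ge0 (L t); lra.
- exact: eq_integrable
    (integrableD measurableT (integrable_abse iL) (integrable_abse iU)).
Qed.

Lemma le_integral_convex_comb (f f1 f2 : T -> R) (a : R) : (0 < a < 1)%R ->
  integrably_bounded_below f -> integrably_bounded_below f1 ->
  integrably_bounded_below f2 ->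
  (forall t, f t <= a * f1 t + (1 - a) * f2 t)%R ->
  \int[mu]_t (f t)%:E
    <= a%:E * \int[mu]_t (f1 t)%:E + (1 - a)%:E * \int[mu]_t (f2 t)%:E.
Proof.
move=> /andP[a0 a1] [mf [L iL Lf]] bf1 bf2 f_le.
have b0 : (0 < 1 - a)%R by rewrite subr_gt0.
have scaled_neqNy (c : R) h : (0 < c)%R ->
    mu.-integrable setT (EFin \o h) \/ \int[mu]_t (h t)%:E = +oo ->
    c%:E * \int[mu]_t (h t)%:E != -oo.
  move=> c0 [/(integrable_fin_num measurableT) hfin|->]; last by rewrite gt0_muley.
  have : c%:E * \int[mu]_t (h t)%:E \is a fin_num by rewrite fin_numM.
  by rewrite fin_numE => /andP[].
have [I1|E1] := integrable_or_integral_pinfty bf1; last first.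
  rewrite E1 gt0_muley ?lte_fin // addye ?leey //.
  exact: scaled_neqNy (integrable_or_integral_pinfty bf2).
have [I2|E2] := integrable_or_integral_pinfty bf2; last first.
  rewrite E2 gt0_muley ?lte_fin // addey ?leey //.
  by apply: scaled_neqNy; last left.
pose h t := (a * f1 t + (1 - a) * f2 t)%R.
have Ih : mu.-integrable setT (EFin \o h).
  exact: eq_integrable (integrableD measurableT (integrableZl measurableT a I1)
                                                (integrableZl measurableT (1 - a) I2)).
have If : mu.-integrable setT (EFin \o f).
  by apply: integrable_between mf iL Ih _ => t; rewrite Lf f_le.
rewrite -(integralZl measurableT I1) -(integralZl measurableT I2).
rewrite -(integralD measurableT (integrableZl measurableT a I1)
                                (integrableZl measurableT (1 - a) I2)).
by apply: (le_integral measurableT If Ih) => t _; rewrite lee_fin f_le.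
Qed.

End IntegralBoundedBelow.

Section AffineImage.
Context (R : realType) (dT : measure_display) (T : measurableType dT).
Variables (mu : {finite_measure set T -> \bar R}) (m : nat) (z : T -> 'cV[R]_m).
Hypothesis z_int : forall i, mu.-integrable setT (fun t => (z t i 0)%:E).

Lemma integrable_affine_coord (A : 'M[R]_m) (b : 'cV[R]_m) i :
  mu.-integrable setT (EFin \o (fun t => (A *m z t + b) i 0)).
Proof.
have Isum : mu.-integrable setT (fun t => \sum_j (A i j)%:E * (z t j 0)%:E)%E.
  by apply: (integrable_sum measurableT) => j _; exact: integrableZl.
apply: eq_integrable (integrableD measurableT Isum
    (finite_measure_integrable_cst mu (b i 0) measurableT)) => // t _.
by rewrite /= !mxE sumEFin.
Qed.

Lemma integrable_l1norm_affine (A : 'M[R]_m) (b : 'cV[R]_m) :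
  mu.-integrable setT (EFin \o (fun t => l1norm (A *m z t + b))).
Proof.
have Isum : mu.-integrable setT
    (fun t => \sum_i `|((A *m z t + b) i 0)%:E|%E).
  apply: (integrable_sum measurableT) => i _.
  exact/integrable_abse/integrable_affine_coord.
by apply: eq_integrable Isum => // t _; rewrite /= /l1norm sumEFin.
Qed.

Lemma convex_fun_affine_bounded_below (g : 'cV[R]_m -> R)
    (A : 'M[R]_m) (b : 'cV[R]_m) :
  convex_fun g -> integrably_bounded_below mu (fun t => g (A *m z t + b)).
Proof.
move=> g_convex; split.
  apply: measurable_convex_fun_comp g_convex _ => i.
  exact/measurable_EFinP/(measurable_int _ (integrable_affine_coord A b i)).
have [C gC] := convex_fun_lower_bound g_convex.
exists (fun t => - C * (1 + l1norm (A *m z t + b))) => //.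
exact: eq_integrable (integrableZl measurableT (- C) (integrableD measurableT
  (finite_measure_integrable_cst mu 1 measurableT) (integrable_l1norm_affine A b))).
Qed.

End AffineImage.

Lemma ls_sample_conv (R : realType) (d m : nat) (T : Type)
    (Sigma0 : 'M[R]_m) (Sigma : {linear 'cV[R]_d -> 'M[R]_m})
    (mu0 : 'cV[R]_m) (mu : 'M[R]_(m, d)) (z0 : T -> 'cV[R]_m) theta theta' (a : R) t :
  ls_sample Sigma0 Sigma mu0 mu z0 (a *: theta + (1 - a) *: theta') t =
  a *: ls_sample Sigma0 Sigma mu0 mu z0 theta t
    + (1 - a) *: ls_sample Sigma0 Sigma mu0 mu z0 theta' t.
Proof.
rewrite /ls_sample linearD !linearZ /= mulmxDr !mulmxDl -!scalemxAl -!scalemxAr.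
by apply/matrixP => i j; rewrite !mxE; ring.
Qed.

Unset Implicit Arguments.
Set Strict Implicit.

Theorem propositionA1 (R : realType) (d m : nat)
  (dT : measure_display) (T : measurableType dT) (P : probability T R)
  (z0 : T -> 'cV[R]_m)
  (z0_meas : forall i : 'I_m, measurable_fun setT (fun t => z0 t i 0))
  (z0_int : forall i : 'I_m, P.-integrable setT (fun t => (z0 t i 0)%:E))
  (z0_mean : forall i : 'I_m, (\int[P]_t (z0 t i 0)%:E = 0)%E)
  (Sigma0 : 'M[R]_m) (Sigma : {linear 'cV[R]_d -> 'M[R]_m})
  (mu0 : 'cV[R]_m) (mu : 'M[R]_(m, d))
  (Theta : set 'cV[R]_d) (Theta_convex : convex_set Theta)
  (full_rank : forall theta, Theta theta -> Sigma0 + Sigma theta \in unitmx) :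
  forall (theta theta' : 'cV[R]_d) (alpha : R),
    Theta theta -> Theta theta' -> 0 < alpha < 1 ->
    forall g : 'cV[R]_m -> R, convex_fun g ->
      (\int[P]_t (g (ls_sample Sigma0 Sigma mu0 mu z0
                       (alpha *: theta + (1 - alpha) *: theta') t))%:E
       <= alpha%:E * \int[P]_t (g (ls_sample Sigma0 Sigma mu0 mu z0 theta t))%:E
          + (1 - alpha)%:E * \int[P]_t (g (ls_sample Sigma0 Sigma mu0 mu z0 theta' t))%:E)%E.
Proof.
move=> theta theta' alpha _ _ alpha01 g g_convex.
have bounded_below th : integrably_bounded_below P
    (fun t => g (ls_sample Sigma0 Sigma mu0 mu z0 th t)).
  rewrite /ls_sample; under eq_fun do rewrite -addrA.
  exact: convex_fun_affine_bounded_below.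
apply: le_integral_convex_comb (alpha01) _ _ _ _ => // t.
by rewrite ls_sample_conv; apply: g_convex; case/andP: (alpha01) => *; lra.
Qed.
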